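(* Let $D$ be a finite digraph and let $\mathcal{S}=\{S_1,\dots,S_t\}$ be a minimum dicoloring of $D$ (i.e., $t=\chi'(D)$). Then there exists a directed path $P$ of $D$ orthogonal to $\mathcal{S}$, that is, $|V(P)\cap S_i|=1$ for every $i\in\{1,\dots,t\}$.
   Context: A dicoloring of $D$ is a partition of $V(D)$ into sets $S_1,\dots,S_t$ such that each induced subdigraph $D[S_i]$ is acyclic. The dichromatic number $\chi'(D)$ is the minimum size of a dicoloring of $D$; a minimum dicoloring is a dicoloring of size $\chi'(D)$. *)

(* A finite digraph is a finType T of vertices with an arc
   relation e : rel T (e x y = there is an arc x -> y). *)
From mathcomp Require Import all_boot.
Set Implicit Arguments. Unset Strict Implicit. Unset Printing Implicit Defensive.

(* D[S] contains a directed cycle: a closed directed walk x -> p1 -> ... -> x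
   all of whose vertices lie in S (covers loops, digons, longer cycles). *)
Definition has_dicycle_in (T : finType) (e : rel T) (S : {set T}) : Prop :=
  exists (x : T) (p : seq T),
    [/\ x \in S, all (fun y => y \in S) p, path e x p & e (last x p) x].

Definition acyclic_set (T : finType) (e : rel T) (S : {set T}) : Prop :=
  ~ has_dicycle_in e S.

Definition dicoloring (T : finType) (e : rel T) (P : {set {set T}}) : Prop :=
  partition P [set: T] /\ forall S, S \in P -> acyclic_set e S.

Definition min_dicoloring (T : finType) (e : rel T) (P : {set {set T}}) : Prop :=
  dicoloring e P /\ forall Q, dicoloring e Q -> #|P| <= #|Q|.

Definition dipath (T : finType) (e : rel T) (x : T) (p : seq T) : bool :=
  path e x p && uniq (x :: p).

Definition orthogonal (T : finType) (x : T) (p : seq T) (P : {set {set T}}) : Prop :=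
  forall S, S \in P -> #|[set v in x :: p] :&: S| = 1.

From mathcomp Require Import all_boot zify.
Set Implicit Arguments. Unset Strict Implicit. Unset Printing Implicit Defensive.

(* Number the colour classes 0, ..., t-1 and call a vertex of colour i
   rainbow if it ends a directed walk whose vertices have colours 0, 1, ..., i
   in this order.  If some vertex of colour t-1 is rainbow, the walk ending
   there is a path meeting every class exactly once.  Otherwise shift every
   non-rainbow vertex down by one colour (vertices of colour 0 are all rainbow,
   and no vertex of colour t-1 is).  A new class is the union of the rainbow
   vertices of some colour k and the non-rainbow ones of colour k+1; an arc
   from the first part to the second would make its head rainbow, so every
   directed cycle of the new class stays inside one of the two parts, which are
   acyclic.  This gives a dicoloring with t-1 colours,
   contradicting minimality. *)

Section ClosedWalks.
Variables (T : eqType) (e : rel T) (F a : pred T).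
Hypothesis a_fwd_closed : {in F &, forall u v, a u -> e u v -> a v}.

Lemma path_has_last x p :
  path e x p -> all F (x :: p) -> has a (x :: p) -> a (last x p).
Proof.
elim: p x => [|y p IHp] x /=; first by rewrite orbF.
move=> /andP[exy pyp] /and3P[Fx Fy Fp] axyp; apply: IHp => //=; first by rewrite Fy.
by case/orP: axyp => [ax | //]; rewrite (a_fwd_closed Fx Fy ax exy).
Qed.

Lemma path_all_fwd_closed x p :
  path e x p -> all F (x :: p) -> a x -> all a (x :: p).
Proof.
elim: p x => [|y p IHp] x /=; first by move=> _ _ ->.
move=> /andP[exy pyp] /and3P[Fx Fy Fp] ax; rewrite ax /=.
apply: IHp => //=; first by rewrite Fy.
exact: (a_fwd_closed Fx Fy ax exy).
Qed.

Lemma closed_walk_all_fwd_closed x p :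
  path e x p -> e (last x p) x -> all F (x :: p) -> has a (x :: p) ->
  all a (x :: p).
Proof.
move=> pxp elx Fxp axp; apply: path_all_fwd_closed => //.
apply: (a_fwd_closed _ _ (path_has_last pxp Fxp axp) elx).
- exact: (allP Fxp _ (mem_last _ _)).
- exact: (allP Fxp _ (mem_head _ _)).
Qed.

End ClosedWalks.

Section Acyclic.
Variables (T : finType) (e : rel T).

Lemma acyclic_subset (A B : {set T}) :
  A \subset B -> acyclic_set e B -> acyclic_set e A.
Proof.
move=> /subsetP sAB acB [x [p [xA pA pxp elx]]]; apply: acB; exists x, p.
by split=> //; [apply: sAB | apply/allP=> y /(allP pA)/sAB].
Qed.

Lemma acyclic_setU (A B : {set T}) :
  (forall u v, u \in A -> v \in B -> ~~ e u v) ->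
  acyclic_set e A -> acyclic_set e B -> acyclic_set e (A :|: B).
Proof.
move=> noAB acA acB [x [p [xAB pAB pxp elx]]].
have ABxp : all [in A :|: B] (x :: p) by rewrite /= xAB.
have A_fwd : {in [in A :|: B] &, forall u v, u \in A -> e u v -> v \in A}.
  move=> u v _; rewrite inE => /orP[// | vB] uA euv.
  by move: (noAB u v uA vB); rewrite euv.
have [Axp | nAxp] := boolP (has [in A] (x :: p)).
  have /andP[xA pA] := closed_walk_all_fwd_closed A_fwd pxp elx ABxp Axp.
  by apply: acA; exists x, p.
have /andP[xB pB] : all [in B] (x :: p).
  apply/allP=> y yxp; move: (allP ABxp y yxp); rewrite inE => /orP[yA | //].
  by case/hasP: nAxp; exists y.
by apply: acB; exists x, p.
Qed.

Definition acyclic_colouring (c : T -> nat) (t : nat) : Prop :=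
  (forall v, c v < t) /\ forall k, acyclic_set e [set v | c v == k].

Lemma dicoloring_of_colouring c t :
  acyclic_colouring c t -> exists Q, dicoloring e Q /\ #|Q| <= t.
Proof.
move=> [c_lt acc]; exists (preim_partition c [set: T]); split.
  split; first exact: preim_partitionP.
  move=> S /imsetP[x _ ->]; apply: acyclic_subset (acc (c x)).
  by apply/subsetP=> y; rewrite !inE eq_sym.
rewrite -[t]card_ord.
apply: leq_trans (leq_imset_card (fun k : 'I_t => [set v | c v == k]) _).
apply/subset_leq_card/subsetP=> S /imsetP[x _ ->].
by apply/imsetP; exists (Ordinal (c_lt x)) => //; apply/setP=> y; rewrite !inE eq_sym.
Qed.

End Acyclic.

Section Rainbow.
Variables (T : finType) (e : rel T) (c : T -> nat).

Fixpoint rainbow i : {set T} :=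
  if i is i'.+1 then [set v | (c v == i) && [exists u in rainbow i', e u v]]
  else [set v | c v == 0].

Lemma rainbow_colour i v : v \in rainbow i -> c v = i.
Proof. by case: i => [|i]; rewrite inE; [move/eqP | case/andP=> /eqP]. Qed.

Lemma rainbow_path i v : v \in rainbow i ->
  exists x p, [/\ path e x p, last x p = v & map c (x :: p) = iota 0 i.+1].
Proof.
elim: i v => [|i IHi] v.
  by move=> v0; exists v, [::]; rewrite /= (rainbow_colour v0).
rewrite inE => /andP[/eqP cv /existsP[u /andP[ui euv]]].
have [x [p [pxp lxp cxp]]] := IHi u ui.
exists x, (rcons p v); rewrite rcons_path pxp lxp euv last_rcons; split=> //.
by rewrite -rcons_cons map_rcons cxp cv -cats1 -[i.+2]addn1 iotaD.
Qed.

Lemma recolour_without_rainbow t :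
  acyclic_colouring e c t -> rainbow t.-1 = set0 ->
  exists c', acyclic_colouring e c' t.-1.
Proof.
move=> [c_lt acc] no_rainbow.
pose keep v := (c v < t.-1) && (v \in rainbow (c v)).
have drop_pos v : ~~ keep v -> 0 < c v.
  rewrite lt0n /keep; apply: contraNN => /eqP cv0.
  have v0 : v \in rainbow 0 by rewrite inE cv0.
  rewrite cv0 v0 andbT lt0n; apply: contraTneq v0 => <-.
  by rewrite no_rainbow inE.
pose c' v := if keep v then c v else (c v).-1.
exists c'; split.
  move=> v; rewrite /c'; case: ifPn => [/andP[] // | /drop_pos].
  by have := c_lt v; lia.
move=> k.
have -> : [set v | c' v == k] =
          [set v | (c v == k) && keep v] :|: [set v | (c v == k.+1) && ~~ keep v].
  apply/setP=> v; rewrite !inE /c'.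
  by case: (boolP (keep v)) => [|/drop_pos]; rewrite ?orbF //; lia.
apply: acyclic_setU.
- move=> u v; rewrite !inE /keep => /andP[/eqP cu /andP[ku ur]] /andP[/eqP cv nkv].
  apply: contraNN nkv => euv.
  have vr : v \in rainbow (c v).
    by rewrite cv inE cv eqxx; apply/existsP; exists u; rewrite -cu ur.
  rewrite vr andbT ltn_neqAle; apply/andP; split; last by rewrite cv -cu.
  by apply: contraTneq vr => ->; rewrite no_rainbow inE.
- by apply: acyclic_subset (acc k); apply/subsetP=> v; rewrite !inE => /andP[].
- by apply: acyclic_subset (acc k.+1); apply/subsetP=> v; rewrite !inE => /andP[].
Qed.

Lemma rainbow_path_or_recolour t :
  acyclic_colouring e c t -> 0 < t ->
  (exists x p, path e x p /\ map c (x :: p) = iota 0 t) \/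
  exists c', acyclic_colouring e c' t.-1.
Proof.
move=> col t_gt0; have [no_rainbow | [v vr]] := set_0Vmem (rainbow t.-1).
  by right; apply: recolour_without_rainbow.
have [x [p [pxp _ cxp]]] := rainbow_path vr.
by left; exists x, p; rewrite cxp prednK.
Qed.

End Rainbow.

Section BlockIndex.
Variables (T : finType) (P : {set {set T}}).
Hypothesis partP : partition P [set: T].

Definition block_index v := index (pblock P v) (enum P).

Lemma pblock_in v : pblock P v \in P.
Proof. by apply: pblock_mem; rewrite (cover_partition partP) inE. Qed.

Lemma block_index_lt v : block_index v < #|P|.
Proof. by rewrite cardE index_mem mem_enum pblock_in. Qed.

Lemma block_index_class v : [set u | block_index u == block_index v] = pblock P v.
Proof.
have [_ triv _] := and3P partP.
apply/setP=> u; rewrite inE /block_index.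
rewrite (inj_in_eq (index_inj set0 (s := enum P))) ?mem_enum ?pblock_in //.
by rewrite eq_sym eq_pblock // (cover_partition partP) inE.
Qed.

Lemma block_index_colouring e :
  dicoloring e P -> acyclic_colouring e block_index #|P|.
Proof.
move=> [_ acP]; split=> [|k]; first exact: block_index_lt.
have [-> | [v]] := set_0Vmem [set v | block_index v == k].
  by move=> [x [p [/[!inE]]]].
by rewrite inE => /eqP <-; rewrite block_index_class; apply/acP/pblock_in.
Qed.

Lemma rainbow_orthogonal x p :
  map block_index (x :: p) = iota 0 #|P| -> orthogonal x p P.
Proof.
have [_ triv set0P] := and3P partP.
move=> cxp S SP; have [v vS] : exists v, v \in S.
  by apply/set0Pn; apply: contraNneq set0P => <-.
have defS : S = [set u | block_index u == block_index v].
  by rewrite block_index_class (def_pblock triv SP vS).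
have uxp : uniq (x :: p) by apply: (map_uniq (f := block_index)); rewrite cxp iota_uniq.
pose colour_v := preim block_index (pred1 (block_index v)).
have -> : #|[set u in x :: p] :&: S| = #|filter colour_v (x :: p)|.
  by apply: eq_card => u; rewrite defS !inE mem_filter andbC.
rewrite (card_uniqP _) ?filter_uniq // size_filter -count_map cxp.
by rewrite count_uniq_mem ?iota_uniq // mem_iota block_index_lt.
Qed.

End BlockIndex.

Theorem mainTheorem2 (T : finType) (e : rel T)
    (loopless : irreflexive e) (nonempty : 0 < #|T|)
    (P : {set {set T}}) (hP : min_dicoloring e P) :
  exists (x : T) (p : seq T), dipath e x p /\ orthogonal x p P.
Proof.
case: hP => [[partP acP] minP].
have P_gt0 : 0 < #|P|.
  have /card_gt0P[v _] := nonempty.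
  by apply/card_gt0P; exists (pblock P v); apply: pblock_in.
have [[x [p [pxp cxp]]] | [c' col']] :=
  rainbow_path_or_recolour (block_index_colouring partP (conj partP acP)) P_gt0.
  exists x, p; split; last exact: rainbow_orthogonal.
  by rewrite /dipath pxp; apply: (map_uniq (f := block_index P)); rewrite cxp iota_uniq.
have [Q [dQ Q_le]] := dicoloring_of_colouring col'.
by have := minP Q dQ; lia.
Qed.
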